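(* Let $B$ be a C*-algebra and $A\subseteq B$ a closed *-subalgebra satisfying the ideal intersection property and axiom (inv) relative to $B$. Then for every closed two-sided ideal $J$ of $B$: (i) $\mathrm{Ann}_B(J\cap A)=\mathrm{Ann}_B(J)$, and (ii) $\mathrm{Ann}_A(J\cap A)=\mathrm{Ann}_B(J)\cap A$.
   Context: For a C*-algebra $C$ and $S\subseteq C$, $[S]$ is the closed linear span, and $S$ is $C$-invariant if $[SC]=[CS]$. For $C$-invariant $S$, $\{x\in C: xs=0\ \forall s\in S\}=\{x\in C: sx=0\ \forall s\in S\}$, denoted $\mathrm{Ann}_C(S)$. $A$ satisfies the ideal intersection property relative to $B$ if $J\cap A\neq\{0\}$ for every nonzero closed two-sided ideal $J$ of $B$. $A$ satisfies axiom (inv) relative to $B$ if $J\cap A$ is $B$-invariant for every closed two-sided ideal $J$ of $B$. *)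

From HB Require Import structures.
From mathcomp Require Import all_boot all_order all_algebra.
From mathcomp Require Import all_classical all_reals all_analysis.
From mathcomp Require Import complex.
Set Implicit Arguments. Unset Strict Implicit. Unset Printing Implicit Defensive.
Import Order.TTheory GRing.Theory Num.Theory.
Import numFieldNormedType.Exports.
Local Open Scope classical_set_scope.
Local Open Scope ring_scope.

Definition is_Cstar_algebra (R : realType) (B : completeNormedModType R[i])
    (mul : B -> B -> B) (star : B -> B) : Prop :=
  [/\ (forall (a : R[i]) (x y z : B), mul (a *: x + y) z = a *: mul x z + mul y z),
      (forall (a : R[i]) (x y z : B), mul x (a *: y + z) = a *: mul x y + mul x z),
      (forall x y z : B, mul x (mul y z) = mul (mul x y) z) &
      (forall x y : B, `|mul x y| <= `|x| * `|y|)] /\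
  [/\ (forall x y : B, star (x + y) = star x + star y),
      (forall (a : R[i]) (x : B), star (a *: x) = a^* *: star x),
      (forall x : B, star (star x) = x),
      (forall x y : B, star (mul x y) = mul (star y) (star x)) &
      (forall x : B, `|mul (star x) x| = `|x| ^+ 2)].

Section Defs.
Variables (R : realType) (B : completeNormedModType R[i]).
Variables (mul : B -> B -> B) (star : B -> B).

Definition lin_span (S : set B) : set B :=
  [set x | exists (n : nat) (c : 'I_n -> R[i]) (s : 'I_n -> B),
      (forall i, S (s i)) /\ x = \sum_(i < n) c i *: s i].

Definition clspan (S : set B) : set B := closure (lin_span S).

Definition prodset (S T : set B) : set B :=
  [set x | exists s t, S s /\ T t /\ x = mul s t].

Definition invariant (C S : set B) : Prop :=
  clspan (prodset S C) = clspan (prodset C S).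

Definition Ann (C S : set B) : set B :=
  [set x | C x /\ forall s, S s -> mul x s = 0].

Definition closed_ideal (J : set B) : Prop :=
  [/\ J 0, (forall x y, J x -> J y -> J (x + y)),
      (forall (a : R[i]) x, J x -> J (a *: x)),
      (forall x y, J y -> J (mul x y) /\ J (mul y x)) & closed J].

Definition closed_star_subalgebra (A : set B) : Prop :=
  [/\ A 0, (forall x y, A x -> A y -> A (x + y)),
      (forall (a : R[i]) x, A x -> A (a *: x)),
      (forall x y, A x -> A y -> A (mul x y)) &
      (forall x, A x -> A (star x))] /\ closed A.

Definition ideal_intersection_property (A : set B) : Prop :=
  forall J, closed_ideal J -> J <> [set 0] -> J `&` A <> [set 0].

Definition axiom_inv (A : set B) : Prop :=
  forall J, closed_ideal J -> invariant setT (J `&` A).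

End Defs.

From Pilot Require Import Defs.
From HB Require Import structures.
From mathcomp Require Import all_boot all_order all_algebra.
From mathcomp Require Import all_classical all_reals all_analysis.
From mathcomp Require Import complex.
Set Implicit Arguments. Unset Strict Implicit. Unset Printing Implicit Defensive.
Import Order.TTheory GRing.Theory Num.Theory.
Import numFieldNormedType.Exports.
Local Open Scope classical_set_scope.
Local Open Scope ring_scope.

(* Let L be the annihilator of J ∩ A. It is a closed left ideal, and axiom
   (inv) makes it a right ideal too, since y b s = 0 for s in J ∩ A follows
   from b s ∈ [B (J ∩ A)] = [(J ∩ A) B]. Hence J ∩ L is a closed ideal of B.
   If z ∈ J ∩ L ∩ A then w = z* z lies in J ∩ A, so z w = 0, so w* w = z* z w = 0,
   and the C*-identity gives w = 0 and then z = 0. By the ideal intersection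
   property J ∩ L = 0, i.e. every x ∈ L satisfies x J ⊆ J ∩ L = 0. *)

Lemma klipschitz_continuous (K : numFieldType) (V W : normedModType K)
    (k : K) (f : V -> W) :
  0 <= k -> k.-lipschitz f -> continuous f.
Proof.
move=> k0 fk x; apply/cvgrPdist_lt => e e0.
have k1 : 0 < k + 1 by rewrite ltr_wpDl.
near=> y; have /= fxy := fk (x, y) (conj I I); apply: (le_lt_trans fxy).
apply: (@le_lt_trans _ _ ((k + 1) * `|x - y|)); first by rewrite ler_wpM2r // lerDl.
rewrite -ltr_pdivlMl //; near: y; apply: cvgr_dist_lt => //.
by rewrite mulrC divr_gt0.
Unshelve. all: by end_near. Qed.

Lemma klipschitz_closed_kernel (K : numFieldType) (V W : normedModType K)
    (k : K) (f : V -> W) :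
  0 <= k -> k.-lipschitz f -> closed [set u | f u = 0].
Proof.
move=> k0 /(@klipschitz_continuous _ _ _ k f k0)/continuous_closedP/(_ [set 0]).
apply; exact/accessible_closed_set1/hausdorff_accessible/norm_hausdorff.
Qed.

Section BanachAlgebra.
Variables (R : realType) (B : completeNormedModType R[i]) (mul : B -> B -> B).

Lemma clspan_sub (S K : set B) :
  closed K -> K 0 -> (forall (a : R[i]) x y, K x -> K y -> K (a *: x + y)) ->
  S `<=` K -> clspan S `<=` K.
Proof.
move=> Kcl K0 Klin SK; rewrite (closure_id K).1 //.
apply: closureS => _ [n [c [s [Ss ->]]]].
elim: n c s Ss => [|n IH] c s Ss; first by rewrite big_ord0.
by rewrite big_ord_recr /= addrC; apply: Klin; [apply: SK | apply: IH].
Qed.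

Lemma closed_idealI (I J : set B) :
  closed_ideal mul I -> closed_ideal mul J -> closed_ideal mul (I `&` J).
Proof.
move=> [I0 ID IZ IM Icl] [J0 JD JZ JM Jcl]; split => //.
- by move=> x y [Ix Jx] [Iy Jy]; split; [apply: ID | apply: JD].
- by move=> a x [Ix Jx]; split; [apply: IZ | apply: JZ].
- by move=> x y [/(IM x) [Ixy Iyx] /(JM x) [Jxy Jyx]].
- exact: closedI.
Qed.

Lemma AnnE (C S : set B) :
  Ann mul C S = Ann mul setT S `&` C.
Proof. by apply/seteqP; split=> x [] => [Cx xS | [_ xS] Cx]. Qed.

Hypothesis mulZDl : forall (a : R[i]) (x y z : B),
  mul (a *: x + y) z = a *: mul x z + mul y z.
Hypothesis mulZDr : forall (a : R[i]) (x y z : B),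
  mul x (a *: y + z) = a *: mul x y + mul x z.
Hypothesis mulA : forall x y z : B, mul x (mul y z) = mul (mul x y) z.
Hypothesis norm_mul_le : forall x y : B, `|mul x y| <= `|x| * `|y|.

Lemma mul0x x : mul 0 x = 0.
Proof. by have := mulZDl (-1) x x x; rewrite !scaleN1r !addNr. Qed.

Lemma mulx0 x : mul x 0 = 0.
Proof. by have := mulZDr (-1) x x x; rewrite !scaleN1r !addNr. Qed.

Lemma mulDx x y z : mul (x + y) z = mul x z + mul y z.
Proof. by have := mulZDl 1 x y z; rewrite !scale1r. Qed.

Lemma mulZx (a : R[i]) x z : mul (a *: x) z = a *: mul x z.
Proof. by have := mulZDl a x 0 z; rewrite !addr0 mul0x addr0. Qed.

Lemma mulBx x y z : mul (x - y) z = mul x z - mul y z.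
Proof. by rewrite mulDx -[- y]scaleN1r mulZx scaleN1r. Qed.

Lemma mulxB x y z : mul x (y - z) = mul x y - mul x z.
Proof. by rewrite [y - z]addrC -[- z]scaleN1r mulZDr scaleN1r addrC. Qed.

Lemma closed_kernel_mull y : closed [set u | mul y u = 0].
Proof.
by apply: (@klipschitz_closed_kernel _ _ _ `|y|) => // -[u v] _ /=; rewrite -mulxB.
Qed.

Lemma closed_kernel_mulr z : closed [set u | mul u z = 0].
Proof.
apply: (@klipschitz_closed_kernel _ _ _ `|z|) => // -[u v] _ /=.
by rewrite -mulBx mulrC.
Qed.

Lemma mull_clspan_eq0 y (S : set B) :
  (forall s, S s -> mul y s = 0) -> forall w, clspan S w -> mul y w = 0.
Proof.
move=> yS; apply: clspan_sub => //; first exact: closed_kernel_mull.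
  exact: mulx0.
by move=> a u v /= yu yv; rewrite mulZDr yu yv scaler0 addr0.
Qed.

Lemma Ann_closed (S : set B) : closed (Ann mul setT S).
Proof.
move=> w Sw; split=> // s Ss; apply: closed_kernel_mulr.
by apply: closureS Sw => u [_ /(_ s Ss)].
Qed.

Lemma Ann_mull (S : set B) x y : Ann mul setT S y -> Ann mul setT S (mul x y).
Proof. by move=> [_ yS]; split=> // s Ss; rewrite -mulA yS // mulx0. Qed.

Lemma Ann_mulr (S : set B) x y :
  Defs.invariant mul setT S -> Ann mul setT S y -> Ann mul setT S (mul y x).
Proof.
move=> Sinv [_ yS]; split=> // s Ss; rewrite -mulA.
apply: (mull_clspan_eq0 (S := prodset mul S setT)).
  by move=> _ [t [b [St [_ ->]]]]; rewrite mulA yS // mul0x.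
rewrite Sinv; apply: subset_closure.
by exists 1%N, (fun=> 1), (fun=> mul x s); split; [exists x, s | rewrite big_ord1 scale1r].
Qed.

Lemma Ann_closed_ideal (S : set B) :
  Defs.invariant mul setT S -> closed_ideal mul (Ann mul setT S).
Proof.
move=> Sinv; split; last exact: Ann_closed.
- by split=> // s _; rewrite mul0x.
- by move=> x y [_ xS] [_ yS]; split=> // s Ss; rewrite mulDx xS // yS // addr0.
- by move=> a x [_ xS]; split=> // s Ss; rewrite mulZx xS // scaler0.
- by move=> x y Sy; split; [apply: Ann_mull | apply: Ann_mulr].
Qed.

Variable star : B -> B.
Hypothesis starK : forall x : B, star (star x) = x.
Hypothesis starM : forall x y : B, star (mul x y) = mul (star y) (star x).
Hypothesis norm_star_mul : forall x : B, `|mul (star x) x| = `|x| ^+ 2.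

Lemma star_mul_eq0 z : mul (star z) z = 0 -> z = 0.
Proof. by move=> zz; apply/normr0_eq0/eqP; rewrite -sqrf_eq0 -norm_star_mul zz normr0. Qed.

(* w = z* z is self-adjoint and w* w = z* (z w). *)
Lemma mul_star_mul_eq0 z : mul z (mul (star z) z) = 0 -> z = 0.
Proof.
move=> zw; apply: star_mul_eq0; apply: star_mul_eq0.
by rewrite starM starK -mulA zw mulx0.
Qed.

Lemma Ann_star_mul_eq0 (S : set B) z :
  S (mul (star z) z) -> Ann mul setT S z -> z = 0.
Proof. by move=> Sw [_ zS]; apply: mul_star_mul_eq0; apply: zS. Qed.

Lemma Ann_ideal_meetE (A J : set B) :
  closed_star_subalgebra mul star A -> ideal_intersection_property mul A ->
  Defs.invariant mul setT (J `&` A) -> closed_ideal mul J ->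
  Ann mul setT (J `&` A) = Ann mul setT J.
Proof.
move=> [[A0 _ _ AM Astar] _] IIP JAinv HJ.
have [J0 _ _ JM _] := HJ.
set L := Ann mul setT (J `&` A).
have JL_ideal : closed_ideal mul (J `&` L).
  exact: closed_idealI HJ (Ann_closed_ideal JAinv).
have JLA0 : J `&` L `&` A = [set 0].
  apply/seteqP; split=> [z [[Jz Lz] Az] | _ ->] /=.
    apply: Ann_star_mul_eq0 Lz; split; first exact: (JM _ _ Jz).1.
    by apply: AM => //; apply: Astar.
  by split=> //; split=> //; split=> // s _; rewrite mul0x.
have JL0 : J `&` L = [set 0] by apply: contrapT => /(IIP _ JL_ideal).
apply/seteqP; split=> x [_ xJA]; split=> // j Jj.
  have : (J `&` L) (mul x j) by split; [exact: (JM _ _ Jj).1 | exact: Ann_mulr].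
  by rewrite JL0.
by apply: xJA; case: Jj.
Qed.

End BanachAlgebra.

Theorem corollary3p4 (R : realType) (B : completeNormedModType R[i])
    (mul : B -> B -> B) (star : B -> B) (A : set B) :
  is_Cstar_algebra mul star ->
  closed_star_subalgebra mul star A ->
  ideal_intersection_property mul A ->
  axiom_inv mul A ->
  forall J : set B, closed_ideal mul J ->
    Ann mul setT (J `&` A) = Ann mul setT J /\
    Ann mul A (J `&` A) = Ann mul setT J `&` A.
Proof.
move=> [[mulZDl mulZDr mulA norm_mul_le] [_ _ starK starM norm_star_mul]]
  HA IIP Ainv J HJ.
have AnnJ := Ann_ideal_meetE mulZDl mulZDr mulA norm_mul_le
  starK starM norm_star_mul HA IIP (Ainv J HJ) HJ.
by split=> //; rewrite AnnE AnnJ.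
Qed.
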